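(* Let $(A_k,b_k,c_k)_{k\in\mathbb{Z}}$ and $(\tilde A_k,\tilde b_k,\tilde c_k)_{k\in\mathbb{Z}}$ (with $A_k,\tilde A_k\in\mathbb{R}^{n\times n}$, $b_k,\tilde b_k\in\mathbb{R}^{n\times1}$, $c_k,\tilde c_k\in\mathbb{R}^{1\times n}$) be algebraically equivalent via invertible matrices $\{T_k\}_{k\in\mathbb{Z}}$, i.e. $\tilde A_k=T_{k+1}A_kT_k^{-1}$, $\tilde b_k=T_{k+1}b_k$, $\tilde c_k=c_kT_k^{-1}$. Then for every $k\in\mathbb{Z}$, $\det(T_k)\,\tilde c_k\operatorname{adj}(\tilde A_k)\tilde b_k=\det(T_{k+1})\,c_k\operatorname{adj}(A_k)b_k$.
   Context: $\operatorname{adj}(A)$ denotes the adjugate of $A$ (the matrix with $A\operatorname{adj}(A)=\operatorname{adj}(A)A=\det(A)I$, whose $(j,i)$ entry is $(-1)^{i+j}$ times the $(i,j)$ minor). *)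

From mathcomp Require Import all_boot all_order all_algebra.
From mathcomp Require Export reals.
Set Implicit Arguments. Unset Strict Implicit. Unset Printing Implicit Defensive.

(* Over an integral domain the adjugate is anti-multiplicative: this is clear
   when the product has a nonzero determinant, by cancelling it in
   [adj (M N) * (M N) = det (M N)], and the general case follows by replacing
   [M] and [N] with the monic perturbations ['X + M] and ['X + N] over
   [{poly R}] and evaluating at [0].  Then
   [adj (Q A P^-1) = adj (P^-1) adj A adj Q], and the outer factors [P^-1] and
   [Q] of [c P^-1] and [Q b] collapse against their adjugates to the scalars
   [det P^-1] and [det Q]. *)

From mathcomp Require Import all_boot all_order all_algebra.
From mathcomp Require Import reals.
Import GRing.Theory Num.Theory.
Local Open Scope ring_scope.

Lemma adj_mulmx_det_neq0 (R : idomainType) n (M N : 'M[R]_n) :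
  \det (M *m N) != 0 -> \adj (M *m N) = \adj N *m \adj M.
Proof.
move=> detMN_neq0.
have adj_mulmx_MN : (\adj N *m \adj M) *m (M *m N) = (\det (M *m N))%:M.
  rewrite -mulmxA (mulmxA (\adj M)) mul_adj_mx mul_scalar_mx -scalemxAr.
  by rewrite mul_adj_mx scale_scalar_mx det_mulmx mulrC.
have diff_annihilates : (\adj (M *m N) - \adj N *m \adj M) *m (M *m N) = 0.
  by rewrite mulmxBl mul_adj_mx adj_mulmx_MN subrr.
move/(congr1 (mulmx^~ (\adj (M *m N)))): diff_annihilates.
rewrite mul0mx -mulmxA mul_mx_adj mul_mx_scalar => /eqP.
by rewrite scalemx_eq0 (negbTE detMN_neq0) subr_eq0 => /eqP.
Qed.

Section Adjugate.

Variables (R : idomainType) (n : nat).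
Implicit Types M N P Q A : 'M[R]_n.

Lemma det_char_poly_mx_neq0 A : \det (char_poly_mx A) != 0.
Proof.
apply: contraTneq (char_poly_monic A) => det0.
by rewrite monicE /char_poly det0 lead_coef0 eq_sym oner_eq0.
Qed.

Lemma char_poly_mxN_at0 A : map_mx (horner_eval 0) (char_poly_mx (- A)) = A.
Proof.
apply/matrixP=> i j; rewrite !mxE horner_evalE.
by rewrite hornerD hornerN hornerC hornerMn hornerX mul0rn add0r opprK.
Qed.

Lemma adj_mulmx M N : \adj (M *m N) = \adj N *m \adj M.
Proof.
pose lift A := char_poly_mx (- A).
have adj_lift : \adj (lift M *m lift N) = \adj (lift N) *m \adj (lift M).
  by rewrite adj_mulmx_det_neq0 // det_mulmx mulf_neq0 ?det_char_poly_mx_neq0.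
have := congr1 (map_mx (horner_eval 0)) adj_lift.
by rewrite !(map_mxM, map_mx_adj) !char_poly_mxN_at0.
Qed.

Lemma det_scale_adj_equiv P Q A (b : 'cV[R]_n) (c : 'rV[R]_n) :
  P \in unitmx ->
  \det P *: (c *m invmx P *m \adj (Q *m A *m invmx P) *m (Q *m b))
  = \det Q *: (c *m \adj A *m b).
Proof.
move=> P_unit.
rewrite !adj_mulmx !mulmxA -(mulmxA c) mul_mx_adj mul_mx_scalar -scalemxAl.
rewrite -!(mulmxA _ (\adj Q)) mul_adj_mx mul_mx_scalar -!scalemxAl.
by rewrite !scalerA det_inv mulrCA mulrV ?mulr1 // -unitmxE.
Qed.

End Adjugate.

Theorem claim10 (R : realType) (n : nat)
  (A At : int -> 'M[R]_n) (b bt : int -> 'cV[R]_n) (c ct : int -> 'rV[R]_n)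
  (T : int -> 'M[R]_n)
  (hT : forall k, T k \in unitmx)
  (hA : forall k, At k = T (k + 1) *m A k *m invmx (T k))
  (hb : forall k, bt k = T (k + 1) *m b k)
  (hc : forall k, ct k = c k *m invmx (T k)) :
  forall k : int,
    \det (T k) *: (ct k *m \adj (At k) *m bt k)
    = \det (T (k + 1)) *: (c k *m \adj (A k) *m b k).
Proof.
move=> k; rewrite hA hb hc.
exact: det_scale_adj_equiv.
Qed.
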